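(* In the setting described in the context, suppose that $\mathbb E_N[e^{\gamma X(x)}]\le R_\gamma\epsilon_N^{-\gamma^2/2}$ for all $\gamma>0$, $x\in\Omega$, $N$ (some $R_\gamma>0$ and $\epsilon_N\to0$), and that there exist deterministic constants $\mathrm C,\mathrm c>0$ such that $\mathbb P_N$-almost surely, for any $x\in\Omega$ there is a (possibly random) compact $\mho_x^N\subset\Omega$ with $|\mho_x^N|\ge\mathrm c\,\epsilon_N^d$ and $X(t)\ge X(x)-\mathrm C$ for all $t\in\mho_x^N$ (it is not required that $x\in\mho_x^N$). Then for any $\alpha>\gamma_*$, $\mathbb P_N[\mathscr T_N^\alpha\ne\emptyset]\to0$ as $N\to\infty$. Moreover, if $\varpi_N$ is any increasing sequence with $\varpi_N/\log\epsilon_N^{-1}\to+\infty$, then for any $\gamma>0$ there is $C_\gamma>0$ with \[ \mathbb P_N\big[\sup_\Omega X\ge\varpi_N\big]\le C_\gamma\epsilon_N^{-\gamma^2/2-d}e^{-\gamma\varpi_N}. \]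
   Context: $\Omega\subset\mathbb R^d$ is a bounded, simply connected open set with smooth boundary; $|\cdot|$ is Lebesgue measure; $\gamma_*=\sqrt{2d}$. For each $N$, $\mathbb P_N$ (expectation $\mathbb E_N$) is a probability measure under which the canonical process $X$ is a random function on $\Omega$ that is integrable, bounded above and upper semicontinuous, and which approximates a Gaussian log-correlated field on $\Omega$ (for each $f\in C_c^\infty(\Omega)$ the law of $\int fX$ converges to that of the Gaussian field with covariance $\log|x-y|^{-1}+g(x,y)$, $g$ continuous, bounded above, $L^2$). Thick points: for $\alpha\ge0$, $\mathscr T_N^\alpha=\{x\in\Omega:X(x)\ge\alpha\log\epsilon_N^{-1}\}$. *)

From HB Require Import structures.
From mathcomp Require Import all_boot all_order all_algebra.
From mathcomp Require Import all_classical all_reals all_analysis.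
Set Implicit Arguments. Unset Strict Implicit. Unset Printing Implicit Defensive.
Import Order.TTheory GRing.Theory Num.Theory.
Import numFieldNormedType.Exports.
Local Open Scope classical_set_scope.
Local Open Scope ring_scope.

(** Points of R^d are row vectors 'rV[R]_d (topology of the product/max norm,
    which is the usual topology of R^d). *)
Section Defs.
Variable R : realType.

Definition eucl_dist (d : nat) (x y : 'rV[R]_d) : R :=
  Num.sqrt (\sum_(i < d) (x ord0 i - y ord0 i) ^+ 2).

(** d-dimensional Lebesgue integral, written out as the iterated
    one-dimensional Lebesgue integral (Fubini/Tonelli). *)
Fixpoint leb_int (d : nat) : ('rV[R]_d -> \bar R) -> \bar R :=
  match d return ('rV[R]_d -> \bar R) -> \bar R with
  | 0 => fun f => f 0
  | d'.+1 => fun f =>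
      (\int[lebesgue_measure]_(t in [set: R])
         leb_int (fun v : 'rV[R]_d' => f (row_mx (const_mx t : 'rV[R]_1) v)))%E
  end.

Definition leb_meas (d : nat) (A : set 'rV[R]_d) : \bar R :=
  leb_int (fun x => (\1_A x)%:E).

Definition Rd_borel (d : nat) := g_sigma_algebraType (@open 'rV[R]_d).

Fixpoint iter_dir (d : nat) (vs : seq 'rV[R]_d) (f : 'rV[R]_d -> R)
  : 'rV[R]_d -> R :=
  match vs with
  | [::] => f
  | v :: vs' => fun x => 'D_v (iter_dir vs' f) x
  end.

Definition smooth (d : nat) (f : 'rV[R]_d -> R) : Prop :=
  (forall vs, continuous (iter_dir vs f)) /\
  (forall vs v x, derivable (iter_dir vs f) x v).

Definition test_fun (d : nat) (Omega : set 'rV[R]_d) (f : 'rV[R]_d -> R) :=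
  smooth f /\ exists K, [/\ compact K, K `<=` Omega &
                            forall x, ~ K x -> f x = 0].

Definition smooth_boundary (d : nat) (Omega : set 'rV[R]_d) :=
  forall p, closure Omega p -> ~ Omega p ->
  exists r : R, exists psi : 'rV[R]_d -> R,
    [/\ 0 < r, smooth psi, psi p = 0,
        exists v, 'D_v psi p != 0 &
        forall x, ball p r x -> (Omega x <-> psi x < 0)].

Definition simply_connected (d : nat) (A : set 'rV[R]_d) :=
  (forall x y, A x -> A y -> exists p : R -> 'rV[R]_d,
     [/\ {within `[0, 1], continuous p}, p @` `[0, 1] `<=` A,
         p 0 = x & p 1 = y]) /\
  (forall g : R -> 'rV[R]_d, {within `[0, 1], continuous g} ->
     g @` `[0, 1] `<=` A -> g 0 = g 1 ->
     exists H : R * R -> 'rV[R]_d,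
       [/\ {within `[0, 1] `*` `[0, 1], continuous H},
           H @` (`[0, 1] `*` `[0, 1]) `<=` A,
           forall s, s \in `[0, 1] -> H (s, 0) = g s /\ H (s, 1) = g 0 &
           forall t, t \in `[0, 1] -> H (0, t) = g 0 /\ H (1, t) = g 0]).

Definition usc_on (d : nat) (Omega : set 'rV[R]_d) (u : 'rV[R]_d -> R) :=
  forall x, Omega x -> forall a, u x < a ->
    \forall y \near x, Omega y -> u y < a.

Definition outer_prob (dT : measure_display) (T : measurableType dT)
  (P : probability T R) (A : set T) : \bar R :=
  ereal_inf [set P B | B in [set B | measurable B /\ A `<=` B]].

(** E[h(Z)] for Z ~ N(0, s2) *)
Definition gauss_expect (s2 : R) (h : R -> R) : \bar R :=
  (\int[lebesgue_measure]_(w in [set: R])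
     (h (Num.sqrt s2 * w) * normal_pdf 0 1 w)%:E)%E.

Definition standing_assumptions (d : nat) (dT : measure_display)
  (T : measurableType dT) (P : nat -> probability T R)
  (X : T -> 'rV[R]_d -> R) (Omega : set 'rV[R]_d) : Prop :=
  [/\
      measurable_fun [set: T * Rd_borel d] (fun p => X p.1 p.2),
      (forall w, (leb_int (fun x => (\1_Omega x * `|X w x|)%:E) < +oo)%E),
      (forall w, exists M : R, forall x, Omega x -> X w x <= M),
      (forall w, usc_on Omega (X w)) &
      (* approximates a Gaussian log-correlated field on Omega *)
      exists g : 'rV[R]_d -> 'rV[R]_d -> R,
        [/\ {within Omega `*` Omega, continuous (fun p => g p.1 p.2)},
            (exists M : R, forall x y, Omega x -> Omega y -> g x y <= M),
            (leb_int (fun x => leb_int (fun y =>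
                (\1_Omega x * \1_Omega y * g x y ^+ 2)%:E)) < +oo)%E &
            forall f, test_fun Omega f ->
            let s2 := fine (leb_int (fun x => leb_int (fun y =>
                  (f x * f y * (- ln (eucl_dist x y) + g x y))%:E))) in
            0 <= s2 /\
            forall h : R -> R, continuous h ->
              (exists M : R, forall t, `|h t| <= M) ->
              (fun N => ('E_(P N)[fun w =>
                  h (fine (leb_int (fun x => (f x * X w x)%:E)))])%E)
                @ \oo --> gauss_expect s2 h]].

End Defs.

From HB Require Import structures.
From mathcomp Require Import all_boot all_order all_algebra.
From mathcomp Require Import all_classical all_reals all_analysis.
From mathcomp Require Import measurable_realfun.
From mathcomp Require Import ring lra.
Import Order.TTheory GRing.Theory Num.Theory.
Import numFieldNormedType.Exports.
Local Open Scope classical_set_scope.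
Local Open Scope ring_scope.

(* Let M_w = \int_Omega exp (gamma X_w). By Tonelli and the exponential moment
   bound, E[M] <= R_gamma eps^(-gamma^2/2) |Omega|. If X_w reaches level v at
   some point x, the plateau assumption gives a compact set of measure at least
   c eps^d on which X_w >= v - C, hence M_w >= c eps^d exp (gamma (v - C)).
   Markov's inequality then bounds the probability that X reaches level v by
   K eps^(-gamma^2/2 - d) exp (-gamma v). With gamma = alpha and
   v = alpha log eps^-1 this is K eps^(alpha^2/2 - d), which tends to 0 when
   alpha > sqrt (2 d); the bound on sup X >= varpi uses the level varpi - 1. *)

Section Rd_lebesgue.
Context {R : realType}.

Lemma open_rV_bigcup_ball {n} [U : set 'rV[R]_n] : open U ->
  exists (q : nat -> 'rV[R]_n) (r : nat -> R),
    U = \bigcup_(k in [set k | ball (q k) (r k) `<=` U]) ball (q k) (r k).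
Proof.
move=> oU.
pose qr k : 'rV[R]_n * R :=
  if @unpickle ('rV[rat]_n * rat)%type k is Some p
  then (map_mx ratr p.1, ratr p.2) else (0, 0).
exists (fst \o qr), (snd \o qr).
apply/seteqP; split; last by move=> x [k /= sub]; apply: sub.
move=> x /oU /nbhs_ballP [e /= e0 xeU].
have [r] := @rat_in_itvoo R 0 (e / 2) ltac:(by rewrite divr_gt0).
rewrite in_itv /= => /andP [r0 re].
have /choice [q qx] : forall j : 'I_n, exists qj : rat,
    ratr qj \in `](x ord0 j - ratr r), (x ord0 j + ratr r)[.
  by move=> j; apply: rat_in_itvoo; rewrite ltrBlDr -addrA ltrDl addr_gt0.
have qrx : ball (map_mx ratr (\row_j q j) : 'rV[R]_n) (ratr r) x.
  split => // i j; rewrite ord1 !mxE /ball /= ltr_distlC.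
  have := qx j; rewrite in_itv /= => /andP[qj1 qj2].
  by apply/andP; split; lra.
exists (pickle (\row_j q j, r)); rewrite /= /qr pickleK //=.
move=> y /(ball_triangle (ball_sym qrx)) xy; apply: xeU.
by apply: le_ball xy; rewrite [e in _ <= e]splitr lerD // ltW.
Qed.

Lemma measurable_fun_Rd_balls {dT : measure_display} {T : measurableType dT} {n}
    (f : T -> Rd_borel R n) :
  (forall q r, measurable (f @^-1` ball q r)) -> measurable_fun setT f.
Proof.
move=> mball; apply: (@measurability _ _ T (Rd_borel R n) _ f (@open 'rV[R]_n)) => //.
move=> _ [U oU <-]; rewrite setTI.
have [q [r ->]] := open_rV_bigcup_ball oU.
by rewrite preimage_bigcup; apply: bigcup_measurable.
Qed.

Definition row_cons {d} (p : R * Rd_borel R d) : Rd_borel R d.+1 :=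
  row_mx (const_mx p.1 : 'rV[R]_1) p.2.

Lemma row_cons_preimage_ball {d} (q : 'rV[R]_(1 + d)) r :
  @row_cons d @^-1` ball q r =
  ball (q ord0 (lshift d ord0)) r `*` (ball (rsubmx q) r : set (Rd_borel R d)).
Proof.
apply/seteqP; split => -[t v]; rewrite /row_cons /= /ball /= /mx_ball.
  move=> [r0 tv]; split; first by have := tv ord0 (lshift d ord0); rewrite row_mxEl mxE.
  by split=> // i j; have := tv i (rshift 1 j); rewrite row_mxEr mxE.
move=> [qt [r0 qv]]; split=> // i j; case: (split_ordP j) => k ->.
  by rewrite row_mxEl mxE !ord1.
by rewrite row_mxEr; have := qv i k; rewrite mxE.
Qed.

Lemma measurable_row_cons d : measurable_fun setT (@row_cons d).
Proof.
apply: measurable_fun_Rd_balls => q r; rewrite row_cons_preimage_ball.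
apply: measurableX; first exact: open_measurable (ball_open _ _).
exact: sub_sigma_algebra (ball_open _ _).
Qed.

Local Open Scope ereal_scope.

Lemma leb_int_ge0 {d} [f : 'rV[R]_d -> \bar R] :
  (forall x, 0 <= f x) -> 0 <= leb_int f.
Proof.
elim: d f => [|d IH] f f0 /=; first exact: f0.
by apply: integral_ge0 => t _; apply: IH.
Qed.

Lemma measurable_fun_row_cons_split {dX} {X : measurableType dX} {d}
    [F : X * Rd_borel R d.+1 -> \bar R] : measurable_fun setT F ->
  measurable_fun setT
    (fun z : (X * measurableTypeR R) * Rd_borel R d => F (z.1.1, row_cons (z.1.2, z.2))).
Proof.
move=> mF; apply: measurableT_comp mF (measurable_fun_pair _ _) => //.
  exact: measurableT_comp measurable_fst measurable_fst.
apply: measurableT_comp (measurable_row_cons d) (measurable_fun_pair _ _) => //.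
exact: measurableT_comp measurable_snd measurable_fst.
Qed.

Lemma measurable_fun_leb_int {d dX} {X : measurableType dX}
    [F : X * Rd_borel R d -> \bar R] :
  measurable_fun setT F -> (forall z, 0 <= F z) ->
  measurable_fun setT (fun w => leb_int (fun x => F (w, x))).
Proof.
elim: d dX X F => [|d IH] dX X F mF F0.
  have m0 : measurable_fun setT (fun w : X => (w, (0%R : 'rV[R]_0) : Rd_borel R 0)).
    exact: measurable_fun_pair.
  exact: measurableT_comp mF m0.
pose G (z : (X * measurableTypeR R) * Rd_borel R d) := F (z.1.1, row_cons (z.1.2, z.2)).
have mG : measurable_fun setT G := measurable_fun_row_cons_split mF.
pose H z := leb_int (fun v => G (z, v)).
have mH : measurable_fun setT H := IH _ _ G mG (fun z => F0 _).
exact: (measurable_fun_fubini_tonelli_F (m2 := lebesgue_measure) H mH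
  (fun z => leb_int_ge0 (fun v => F0 _))).
Qed.

Lemma measurable_fun_leb_int_row {d} (f : Rd_borel R d.+1 -> \bar R) :
  measurable_fun setT f -> (forall x, 0 <= f x) ->
  measurable_fun setT
    (fun t : measurableTypeR R => leb_int (fun v => f (row_cons (t, v)))).
Proof.
move=> mf f0; apply: (measurable_fun_leb_int (F := f \o @row_cons d)) => [|z].
- exact: measurableT_comp mf (measurable_row_cons d).
- exact: f0.
Qed.

Lemma measurable_fun_row_cons_section {d} (f : Rd_borel R d.+1 -> \bar R) t :
  measurable_fun setT f ->
  measurable_fun (setT : set (Rd_borel R d)) (fun v => f (row_cons (t, v))).
Proof.
move=> mf; apply: measurableT_comp mf _.
exact: measurableT_comp (measurable_row_cons d) (measurable_fun_pair _ _).
Qed.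

Lemma fubini_tonelli_leb_int {d dX} {X : measurableType dX}
    (mu : {sigma_finite_measure set X -> \bar R}) [F : X * Rd_borel R d -> \bar R] :
  measurable_fun setT F -> (forall z, 0 <= F z) ->
  \int[mu]_w leb_int (fun x => F (w, x)) = leb_int (fun x => \int[mu]_w F (w, x)).
Proof.
elim: d dX X mu F => [|d IH] dX X mu F mF F0 //=.
pose G (z : (X * measurableTypeR R) * Rd_borel R d) := F (z.1.1, row_cons (z.1.2, z.2)).
have G0 z : 0 <= G z by exact: F0.
have mG := measurable_fun_leb_int (measurable_fun_row_cons_split mF) G0.
rewrite (fubini_tonelli (fun z => leb_int (fun v => G (z, v))) mG
  (fun z => leb_int_ge0 (fun v => G0 _))) /=.
apply: eq_integral => t _.
apply: (IH _ _ mu (fun p => F (p.1, row_cons (t, p.2)))) => [|z]; last exact: F0.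
have mrow : measurable_fun setT (fun p : X * Rd_borel R d => row_cons (t, p.2)).
  exact: measurableT_comp (measurable_row_cons d) (measurable_fun_pair _ _).
exact: measurableT_comp mF (measurable_fun_pair measurable_fst mrow).
Qed.

Lemma open_measurable_Rd {d} [U : set 'rV[R]_d] : open U ->
  measurable (U : set (Rd_borel R d)).
Proof. exact: sub_sigma_algebra. Qed.

Lemma compact_measurable_Rd {d} [K : set 'rV[R]_d] : compact K ->
  measurable (K : set (Rd_borel R d)).
Proof.
move=> /(compact_closed (@norm_hausdorff _ _)) /closed_openC oK.
by rewrite -[K]setCK; apply: measurableC; apply: open_measurable_Rd.
Qed.

Lemma le_leb_int {d} [f g : Rd_borel R d -> \bar R] :
  measurable_fun setT f -> measurable_fun setT g ->
  (forall x, 0 <= f x) -> (forall x, f x <= g x) -> leb_int f <= leb_int g.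
Proof.
elim: d f g => [|d IH] f g mf mg f0 fg /=; first exact: fg.
have g0 x : 0 <= g x := le_trans (f0 x) (fg x).
apply: ge0_le_integral => //.
- by move=> t _; apply: leb_int_ge0.
- exact: measurable_fun_leb_int_row.
- exact: measurable_fun_leb_int_row.
- by move=> t _; apply: IH => //; apply: measurable_fun_row_cons_section.
Qed.

Lemma leb_intZl {d} (k : R) [f : Rd_borel R d -> \bar R] : (0 <= k)%R ->
  measurable_fun setT f -> (forall x, 0 <= f x) ->
  leb_int (fun x => k%:E * f x) = k%:E * leb_int f.
Proof.
elim: d f => [|d IH] f k0 mf f0 //=.
rewrite -ge0_integralZl_EFin //.
- apply: eq_integral => t _; apply: IH => //.
  exact: measurable_fun_row_cons_section.
- by move=> t _; apply: leb_int_ge0.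
- exact: measurable_fun_leb_int_row.
Qed.

Lemma le_leb_meas {d} [A B : set (Rd_borel R d)] : measurable A -> measurable B ->
  A `<=` B -> leb_meas A <= leb_meas B.
Proof.
move=> mA mB AB; apply: le_leb_int => [||x|x]; rewrite ?lee_fin //.
- exact/measurable_EFinP/measurable_indic.
- exact/measurable_EFinP/measurable_indic.
- by rewrite !indicE; case: (boolP (x \in A)) => // /set_mem/AB/mem_set ->.
Qed.

Lemma indic_ball0_row_cons d (r : R) t v :
  (\1_(ball (0%R : 'rV[R]_d.+1) r) (row_cons (t, v)) : R) =
  (\1_(ball 0%R r) t * \1_(ball (0%R : 'rV[R]_d) r) v)%R.
Proof.
rewrite /indic -[row_cons _ \in _]/((t, v) \in row_cons @^-1` ball (0%R : 'rV_(1 + d)) r).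
rewrite row_cons_preimage_ball in_setX mxE (_ : rsubmx 0 = 0 :> 'rV_d)%R; last first.
  by apply/matrixP => i j; rewrite !mxE.
by case: (_ \in _); case: (_ \in _); rewrite /= ?mulr1 ?mulr0.
Qed.

Lemma leb_meas_ball0 d (r : R) : (0 < r)%R ->
  leb_meas (ball (0%R : 'rV[R]_d) r) = ((r *+ 2) ^+ d)%:E.
Proof.
move=> r0; elim: d => [|d IH].
  by rewrite /leb_meas /= indicE mem_set //; exact: ballxx.
rewrite /leb_meas /=.
have mball n : measurable (ball (0%R : 'rV[R]_n) r : set (Rd_borel R n)).
  exact: open_measurable_Rd (ball_open _ _).
under eq_integral => t _.
  under eq_fun => v do rewrite indic_ball0_row_cons EFinM.
  rewrite leb_intZl //; last exact/measurable_EFinP/measurable_indic.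
  rewrite [leb_int _]IH.
  over.
have mball1 : measurable (ball 0%R r : set (measurableTypeR R)).
  exact: open_measurable (ball_open _ _).
rewrite ge0_integralZr //.
- rewrite integral_indic ?setIT // [X in X * _](_ : _ = (r *+ 2)%:E).
    by rewrite -EFinM exprS.
  exact: lebesgue_measure_ball (ltW r0).
- exact/measurable_EFinP/measurable_indic.
- by rewrite lee_fin exprn_ge0 // mulrn_wge0 // ltW.
Qed.

Lemma leb_meas_bounded_lt {d} [A : set 'rV[R]_d] : measurable (A : set (Rd_borel R d)) ->
  bounded_set A -> leb_meas A < +oo.
Proof.
move=> mA [M [Mreal AM]].
have r0 : (0 < `|M| + 2)%R by rewrite ltr_wpDl.
have AB : A `<=` ball (0%R : 'rV[R]_d) (`|M| + 2).
  move=> x Ax; rewrite -ball_normE /= sub0r normrN.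
  apply: le_lt_trans (AM (`|M| + 1)%R _ _ Ax) _; last by rewrite ltrD2l ltr1n.
  by rewrite ltr_pwDr // real_ler_norm.
apply: le_lt_trans (le_leb_meas mA (open_measurable_Rd (ball_open _ _)) AB) _.
by rewrite leb_meas_ball0 // ltry.
Qed.

End Rd_lebesgue.

Section outer_prob.
Local Open Scope ereal_scope.
Context {R : realType} {dT : measure_display} {T : measurableType dT}.
Variable P : probability T R.

Lemma outer_prob_ge0 (A : set T) : 0 <= outer_prob P A.
Proof. by apply: le_ereal_inf_tmp => _ [B _ <-]; apply: measure_ge0. Qed.

Lemma le_outer_prob [A B : set T] : A `<=` B -> outer_prob P A <= outer_prob P B.
Proof.
move=> AB; apply: le_ereal_inf_tmp => _ [C [mC BC] <-].
apply: ge_ereal_inf; exists (P C) => //.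
by exists C => //; split => //; apply: subset_trans BC.
Qed.

Lemma outer_prob_le_null [A B N : set T] : measurable B -> measurable N ->
  P N = 0 -> A `<=` B `|` N -> outer_prob P A <= P B.
Proof.
move=> mB mN PN0 ABN; apply: ge_ereal_inf; exists (P (B `|` N)).
  by exists (B `|` N) => //; split => //; apply: measurableU.
apply: le_trans (measureU2 _ mB mN) _.
by rewrite [X in _ + X <= _](_ : _ = 0) ?adde0.
Qed.

End outer_prob.

Definition level_reached {R : realType} {d} {T} (X : T -> 'rV[R]_d -> R)
  (Omega : set 'rV[R]_d) (v : R) : set T :=
  [set w | exists x, Omega x /\ v <= X w x].

Section exp_mass.
Local Open Scope ereal_scope.
Context {R : realType} {d : nat} {dT : measure_display} {T : measurableType dT}.
Variables (P : probability T R) (X : T -> 'rV[R]_d -> R) (Omega : set 'rV[R]_d).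
Hypothesis mX : measurable_fun [set: (T * Rd_borel R d)%type] (fun p => X p.1 p.2).
Hypothesis mOmega : measurable (Omega : set (Rd_borel R d)).
Variable gamma : R.

Definition exp_mass w := leb_int (fun x => (\1_Omega x * expR (gamma * X w x))%:E).

Let integrand (p : T * Rd_borel R d) := (\1_Omega p.2 * expR (gamma * X p.1 p.2))%:E.

Let integrand_ge0 p : 0 <= integrand p.
Proof. by rewrite lee_fin mulr_ge0 // expR_ge0. Qed.

Let measurable_integrand : measurable_fun setT integrand.
Proof.
apply/measurable_EFinP/measurable_funM.
  exact: measurableT_comp (measurable_indic mOmega) measurable_snd.
have mgX : measurable_fun setT (fun p : T * Rd_borel R d => gamma * X p.1 p.2)%R.
  exact: measurable_funM.
exact: measurableT_comp (@measurable_expR R) mgX.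
Qed.

Lemma measurable_exp_mass : measurable_fun setT exp_mass.
Proof. exact: measurable_fun_leb_int measurable_integrand integrand_ge0. Qed.

Lemma exp_mass_ge0 w : 0 <= exp_mass w.
Proof. by apply: leb_int_ge0 => x; apply: integrand_ge0 (w, x). Qed.

Lemma expectation_exp_mass_le [B : R] : (0 <= B)%R ->
  (forall x, Omega x -> 'E_P[fun w => expR (gamma * X w x)] <= B%:E) ->
  \int[P]_w exp_mass w <= B%:E * leb_meas Omega.
Proof.
move=> B0 mom.
rewrite /exp_mass (fubini_tonelli_leb_int P measurable_integrand integrand_ge0).
rewrite /leb_meas -leb_intZl //; last exact/measurable_EFinP/measurable_indic.
apply: le_leb_int => [||x|x].
- exact: measurable_fun_fubini_tonelli_G measurable_integrand integrand_ge0.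
- exact/measurable_EFinP/measurable_funM/measurable_indic.
- by apply: integral_ge0 => w _; apply: integrand_ge0 (w, x).
rewrite /integrand indicE; case: (boolP (x \in Omega)) => [/set_mem Ox|_].
  under eq_integral do rewrite mul1r.
  by rewrite mule1; have := mom x Ox; rewrite unlock.
by under eq_integral do rewrite mul0r; rewrite integral0 mule0.
Qed.

Lemma exp_mass_ge [w : T] [K : set 'rV[R]_d] [a : R] : (0 <= gamma)%R ->
  compact K -> K `<=` Omega -> (forall t, K t -> a <= X w t)%R ->
  (expR (gamma * a))%:E * leb_meas K <= exp_mass w.
Proof.
move=> g0 cK KO aK; have mK := compact_measurable_Rd cK.
rewrite /leb_meas -leb_intZl ?expR_ge0 //; last exact/measurable_EFinP/measurable_indic.
apply: le_leb_int => [||t|t].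
- exact/measurable_EFinP/measurable_funM/measurable_indic.
- have mw : measurable_fun setT (fun t : Rd_borel R d => (w, t)).
    exact: measurable_fun_pair.
  exact: measurableT_comp measurable_integrand mw.
- by rewrite lee_fin mulr_ge0 // expR_ge0.
have [Kt|nKt] := pselect (K t).
  have -> : (\1_K t : R) = 1%R by rewrite indicE mem_set.
  have -> : (\1_Omega t : R) = 1%R by rewrite indicE mem_set //; apply: KO.
  by rewrite mule1 mul1r lee_fin ler_expR ler_wpM2l // aK.
have -> : (\1_K t : R) = 0%R by rewrite indicE memNset.
by rewrite mule0 lee_fin mulr_ge0 // expR_ge0.
Qed.

Lemma outer_prob_level_reached_le [B C m : R] (v : R) :
  (0 < gamma)%R -> (0 <= B)%R -> (0 < m)%R ->
  (forall x, Omega x -> 'E_P[fun w => expR (gamma * X w x)] <= B%:E) ->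
  {ae P, forall w, forall x, Omega x -> exists K : set 'rV[R]_d,
      [/\ compact K, K `<=` Omega, m%:E <= leb_meas K &
          forall t, K t -> (X w x - C <= X w t)%R]} ->
  outer_prob P (level_reached X Omega v) <=
  (B * expR (gamma * C) / m * expR (- (gamma * v)))%:E * leb_meas Omega.
Proof.
move=> g0 B0 m0 mom [N [mN PN0 QN]].
pose thr := (m * expR (gamma * (v - C)))%R.
have thr0 : (0 < thr)%R by rewrite mulr_gt0 // expR_gt0.
pose E := [set w | thr%:E <= exp_mass w].
have mE : measurable E.
  by rewrite -[E]setTI; apply: emeasurable_fun_c_infty => //; exact: measurable_exp_mass.
have level_sub : level_reached X Omega v `<=` E `|` N.
  move=> w [x [Ox vx]]; have [Nw|Nw] := pselect (N w); [by right|left].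
  have /(_ x Ox) [K [cK KO mK XK]] : forall y, Omega y -> exists K : set 'rV[R]_d,
      [/\ compact K, K `<=` Omega, m%:E <= leb_meas K &
           forall t, K t -> (X w y - C <= X w t)%R].
    by apply: contrapT => nQ; apply: Nw; apply: QN.
  rewrite /E /thr /= EFinM muleC; apply: le_trans _ (exp_mass_ge (ltW g0) cK KO XK).
  apply: lee_pmul => //; rewrite lee_fin.
  - exact: ltW.
  - by rewrite ler_expR ler_wpM2l ?(ltW g0) // lerB.
have markov : thr%:E * P E <= \int[P]_w exp_mass w.
  have -> : E = [set w | thr%:E <= `|exp_mass w|].
    by apply/seteqP; split => w; rewrite /= gee0_abs ?exp_mass_ge0.
  have <- : \int[P]_w `|exp_mass w| = \int[P]_w exp_mass w.
    by apply: eq_integral => w _; rewrite gee0_abs ?exp_mass_ge0.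
  rewrite -[X in P X]setTI.
  by apply: le_integral_abse => //; apply: measurable_exp_mass.
apply: le_trans (outer_prob_le_null P mE mN PN0 level_sub) _.
have -> : (B * expR (gamma * C) / m * expR (- (gamma * v)) = thr^-1 * B)%R.
  rewrite /thr mulrBr expRD !expRN; field.
  by rewrite (gt_eqF m0) !gt_eqF ?expR_gt0.
rewrite EFinM -muleA lee_pdivlMl //.
exact: le_trans markov (expectation_exp_mass_le B0 mom).
Qed.

End exp_mass.

Lemma ereal_sup_image_ge {R : realType} {I : Type} (A : set I) (f : I -> R) (v : R) :
  (v%:E <= ereal_sup [set (f x)%:E | x in A])%E -> exists x, A x /\ v - 1 <= f x.
Proof.
move=> vA; have /ereal_sup_gt [_ [x Ax <-]] :
    ((v - 1)%:E < ereal_sup [set (f x)%:E | x in A])%E.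
  by apply: lt_le_trans vA; rewrite lte_fin ltrBlDr ltrDl.
by rewrite lte_fin => /ltW; exists x.
Qed.

Lemma powR_seq_cvg0 {R : realType} (eps : nat -> R) (k : R) : (0 < k) ->
  (forall N, 0 < eps N) -> eps @ \oo --> 0 -> (fun N => eps N `^ k) @ \oo --> 0.
Proof.
move=> k0 eps0 eps_cvg; apply: (cvg_comp _ _ _ (powR_cvg0 k0)) => U /eps_cvg.
exact: filterS (fun N epsNU => epsNU (eps0 N)).
Qed.

Section level_reached.
Local Open Scope ereal_scope.
Context {R : realType} {d : nat} {dT : measure_display} {T : measurableType dT}.
Context {P : nat -> probability T R} {X : T -> 'rV[R]_d -> R} {Omega : set 'rV[R]_d}.
Context {eps : nat -> R} {C c : R}.
Hypothesis mX : measurable_fun [set: (T * Rd_borel R d)%type] (fun p => X p.1 p.2).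
Hypothesis mOmega : measurable (Omega : set (Rd_borel R d)).
Hypothesis finOmega : leb_meas Omega < +oo.
Hypothesis eps_gt0 : forall N, (0 < eps N)%R.
Hypothesis c_gt0 : (0 < c)%R.
Hypothesis plateau : forall N, {ae P N, forall w, forall x, Omega x ->
  exists K : set 'rV[R]_d, [/\ compact K, K `<=` Omega,
    (c * eps N ^+ d)%:E <= leb_meas K & forall t, K t -> (X w x - C <= X w t)%R]}.

Lemma level_reached_tail [gamma Rg : R] : (0 < gamma)%R -> (0 < Rg)%R ->
  (forall N x, Omega x ->
     'E_(P N)[fun w => expR (gamma * X w x)] <=
     (Rg * eps N `^ (- (gamma ^+ 2 / 2)))%:E) ->
  exists K : R, (0 < K)%R /\ forall N v,
    outer_prob (P N) (level_reached X Omega v) <=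
    (K * eps N `^ (- (gamma ^+ 2 / 2) - d%:R) * expR (- (gamma * v)))%:E.
Proof.
move=> g0 Rg0 mom.
have [L LE] : exists L, leb_meas Omega = L%:E.
  by exists (fine (leb_meas Omega)); rewrite fineK // ge0_fin_numE // leb_int_ge0.
have L0 : (0 <= L)%R by rewrite -lee_fin -LE leb_int_ge0.
(* [L + 1] rather than [L] keeps the constant positive when [Omega] is null. *)
have L1 : (0 < L + 1)%R by lra.
exists ((L + 1) * Rg * expR (gamma * C) / c)%R; split.
  by rewrite divr_gt0 // !mulr_gt0 // expR_gt0.
move=> N v; have e0 := eps_gt0 N.
have B0 : (0 <= Rg * eps N `^ (- (gamma ^+ 2 / 2)))%R.
  by rewrite mulr_ge0 ?powR_ge0 // ltW.
have m0 : (0 < c * eps N ^+ d)%R by rewrite mulr_gt0 // exprn_gt0.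
apply: le_trans (outer_prob_level_reached_le (P N) X Omega mX mOmega gamma v g0 B0 m0
  (mom N) (plateau N)) _.
rewrite LE -EFinM lee_fin.
rewrite powRD ?(gt_eqF e0) ?implybT // (powRN _ d%:R) (powR_mulrn _ (ltW e0)).
set a := (eps N `^ _)%R; set b := (eps N ^+ d)%R.
have a0 : (0 <= a)%R by rewrite powR_ge0.
have b0 : (0 < b)%R by rewrite exprn_gt0.
rewrite -subr_ge0
  (_ : _ - _ = Rg * a * expR (gamma * C) / (c * b) * expR (- (gamma * v)))%R.
  by rewrite !mulr_ge0 ?expR_ge0 ?invr_ge0 ?(ltW Rg0) ?(ltW (mulr_gt0 c_gt0 b0)).
by field; rewrite !gt_eqF.
Qed.

Lemma level_reached_cvg0 [alpha Rg : R] : (Num.sqrt (2 * d%:R) < alpha)%R ->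
  eps @ \oo --> 0%R -> (0 < Rg)%R ->
  (forall N x, Omega x ->
     'E_(P N)[fun w => expR (alpha * X w x)] <=
     (Rg * eps N `^ (- (alpha ^+ 2 / 2)))%:E) ->
  (fun N => outer_prob (P N) (level_reached X Omega (alpha * ln (eps N)^-1))) @ \oo --> 0.
Proof.
move=> alpha_gt eps_cvg Rg0 mom.
have a0 : (0 < alpha)%R := le_lt_trans (sqrtr_ge0 _) alpha_gt.
have [K [K0 tail]] := level_reached_tail a0 Rg0 mom.
have k0 : (0 < alpha ^+ 2 / 2 - d%:R)%R.
  suff : (2 * d%:R < alpha ^+ 2)%R by lra.
  by rewrite -(sqr_sqrtr (_ : 0 <= 2 * d%:R)%R) ?ltrXn2r ?sqrtr_ge0 ?mulr_ge0 // ltW.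
apply: (@squeeze_cvge _ _ _ _ (fun _ => 0) _
  (fun N => (K * eps N `^ (alpha ^+ 2 / 2 - d%:R))%:E)); last 2 first.
- exact: cvg_cst.
- apply/fine_cvgP; split; first exact: nearW.
  rewrite -(mulr0 K); apply: cvgM; first exact: cvg_cst.
  exact: powR_seq_cvg0 k0 eps_gt0 eps_cvg.
apply: nearW => N; apply/andP; split; first exact: outer_prob_ge0.
have e0 := eps_gt0 N.
have eps_exp : (eps N `^ (- (alpha ^+ 2 / 2) - d%:R) *
    expR (- (alpha * (alpha * ln (eps N)^-1))) = eps N `^ (alpha ^+ 2 / 2 - d%:R))%R.
  by rewrite /powR !(gt_eqF e0) -expRD lnV ?posrE //; congr expR; field.
by apply: le_trans (tail N _) _; rewrite -mulrA eps_exp.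
Qed.

Lemma sup_tail [gamma Rg : R] : (0 < gamma)%R -> (0 < Rg)%R ->
  (forall N x, Omega x ->
     'E_(P N)[fun w => expR (gamma * X w x)] <=
     (Rg * eps N `^ (- (gamma ^+ 2 / 2)))%:E) ->
  exists K : R, (0 < K)%R /\ forall N v,
    outer_prob (P N) [set w | v%:E <= ereal_sup [set (X w x)%:E | x in Omega]] <=
    (K * eps N `^ (- (gamma ^+ 2 / 2) - d%:R) * expR (- (gamma * v)))%:E.
Proof.
move=> g0 Rg0 mom; have [K [K0 tail]] := level_reached_tail g0 Rg0 mom.
exists (K * expR gamma)%R; split => [|N v]; first by rewrite mulr_gt0 ?expR_gt0.
have sub_level : [set w | v%:E <= ereal_sup [set (X w x)%:E | x in Omega]]
    `<=` level_reached X Omega (v - 1).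
  by move=> w /ereal_sup_image_ge.
apply: le_trans (le_outer_prob _ sub_level) _; apply: le_trans (tail N _) _.
rewrite lee_fin (_ : - (gamma * (v - 1)) = - (gamma * v) + gamma)%R; last by ring.
by rewrite expRD -subr_ge0 (_ : _ - _ = 0)%R //; ring.
Qed.

End level_reached.

Theorem proposition3p8 (R : realType) (d : nat) (dT : measure_display)
  (T : measurableType dT) (P : nat -> probability T R)
  (X : T -> 'rV[R]_d -> R) (Omega : set 'rV[R]_d) (eps : nat -> R) :
  open Omega -> bounded_set Omega -> simply_connected Omega ->
  smooth_boundary Omega ->
  standing_assumptions P X Omega ->
  (forall N, 0 < eps N) -> eps @ \oo --> 0 ->
  (forall gamma : R, 0 < gamma -> exists Rg : R, 0 < Rg /\
     forall N x, Omega x ->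
       ('E_(P N)[fun w => expR (gamma * X w x)]
          <= (Rg * eps N `^ (- (gamma ^+ 2 / 2)))%:E)%E) ->
  (exists C c : R, [/\ 0 < C, 0 < c &
     forall N, {ae P N, forall w, forall x, Omega x ->
       exists K : set 'rV[R]_d,
         [/\ compact K, K `<=` Omega,
             ((c * eps N ^+ d)%:E <= leb_meas K)%E &
             forall t, K t -> X w x - C <= X w t]}]) ->
  (forall alpha : R, Num.sqrt (2 * d%:R) < alpha ->
     (fun N => outer_prob (P N)
        [set w | exists x, Omega x /\ alpha * ln (eps N)^-1 <= X w x])
       @ \oo --> 0%E)
  /\
  (forall varpi : nat -> R,
     {homo varpi : n m / (n <= m)%N >-> n <= m} ->
     (fun N => varpi N / ln (eps N)^-1) @ \oo --> +oo ->
     forall gamma : R, 0 < gamma -> exists Cg : R, 0 < Cg /\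
       forall N,
         (outer_prob (P N)
            [set w | ((varpi N)%:E <= ereal_sup [set (X w x)%:E | x in Omega])%E]
          <= (Cg * eps N `^ (- (gamma ^+ 2 / 2) - d%:R)
                 * expR (- (gamma * varpi N)))%:E)%E).
Proof.
move=> oO bO _ _ [mX _ _ _ _] eps_gt0 eps_cvg mom [C [c [_ c_gt0 plateau]]].
have mO := open_measurable_Rd oO.
have finO := leb_meas_bounded_lt mO bO.
split=> [alpha alpha_gt|varpi _ _ gamma g0].
- have [Rg [Rg0 momg]] := mom alpha (le_lt_trans (sqrtr_ge0 _) alpha_gt).
  exact (level_reached_cvg0 mX mO finO eps_gt0 c_gt0 plateau alpha_gt eps_cvg Rg0 momg).
- have [Rg [Rg0 momg]] := mom gamma g0.
  have [K [K0 tail]] := sup_tail mX mO finO eps_gt0 c_gt0 plateau g0 Rg0 momg.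
  by exists K; split => // N; apply: tail.
Qed.
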